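(* Let $t\in\{1,\dots,T\}$, and suppose that every component of the vector $\sum_{i=0}^{t-1}\Delta_i^{t}\in\mathbb{R}^p$ is nonzero. Then \[ \frac{\left\|\theta_{t}^{BP}-\theta_{t}^{\lambda}\right\|_2}{\left\|\theta_{t}^{BP}-\theta_{0}\right\|_2}\;\longrightarrow\;0 \qquad\text{as } \alpha\to 0^+ . \]
   Context: Fix integers $d,p\ge 1$ and a horizon $T\ge 1$. A recurrent network with a differentiable transition map $f$ and fixed inputs $x_1,\dots,x_T$ produces hidden states $h_0,h_1,\dots,h_T\in\mathbb{R}^d$ via $h_t=f(x_t,h_{t-1})$ (network parameters are held fixed). For $1\le t\le T$ there is a loss $L_t=\ell_t(h_t)$ with $\ell_t$ differentiable. For $0\le s\le\tau\le T$, $\partial h_\tau/\partial h_s\in\mathbb{R}^{d\times d}$ denotes the Jacobian of $h_\tau$ viewed as a function of $h_s$ through the recursion (the identity if $\tau=s$), and for $s<\tau$, $\partial L_\tau/\partial h_s\in\mathbb{R}^d$ is the gradient of $L_\tau$ viewed as a function of $h_s$. For $v\in\mathbb{R}^d$, the notation $v^\top \partial h_\tau/\partial h_s$ denotes the vector $(\partial h_\tau/\partial h_s)^\top v\in\mathbb{R}^d$. A ''synthesiser'' is a map $g:\mathbb{R}^d\times\mathbb{R}^p\to\mathbb{R}^d$, $(h,\theta)\mapsto g(h;\theta)$, continuously differentiable in $\theta$, with $\nabla_\theta g(h;\theta)\in\mathbb{R}^{d\times p}$ its Jacobian with respect to $\theta$. Fix $\gamma,\lambda\in[0,1]$, an initial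 weight vector $\theta_0\in\mathbb{R}^p$, and a learning rate $\alpha>0$; all quantities below except the data depend on $\alpha$. Conventions: $0^0=1$. $n$-step and interim $\lambda$-weighted synthetic gradients relative to a sequence of weight vectors $(\vartheta_i)$: for $k\ge 0$, $n\ge1$, $k+n\le T$, $G_k^{(n)}=\sum_{\tau=1}^{n}\gamma^{\tau-1}\frac{\partial L_{k+\tau}}{\partial h_k}+\gamma^{n}\,g(h_{k+n};\vartheta_{k+n-1})^\top\frac{\partial h_{k+n}}{\partial h_k}$, and for $0\le k<H\le T$, $G_k^{\lambda\mid H}=(1-\lambda)\sum_{n=1}^{H-k-1}\lambda^{n-1}G_k^{(n)}+\lambda^{H-k-1}G_k^{(H-k)}$. Accumulate $\mathrm{BP}(\lambda)$: set $e_{-1}=0\in\mathbb{R}^{d\times p}$ and, starting from $\theta_0$, for $t=0,1,\dots,T-1$: $e_t=\gamma\lambda\,\frac{\partial h_t}{\partial h_{t-1}}e_{t-1}+\nabla_\theta g(h_t;\theta_t)$ (the first term is zero for $t=0$), $\delta_t=\frac{\partial L_{t+1}}{\partial h_t}+\gamma\, g(h_{t+1};\theta_t)^\top\frac{\partial h_{t+1}}{\partial h_t}-g(h_t;\theta_t)\in\mathbb{R}^d$, and $\theta_{t+1}=\theta_t+\alpha\, e_t^\top\delta_t$. Write $\theta_t^{BP}$ for the vector $\theta_t$ so produced. Online $\lambda$-SG algorithm: for each horizon $t\in\{1,\dots,T\}$ set $\theta_0^t=\theta_0$ and for $k=0,\dots,t-1$, $\theta_{k+1}^t=\theta_k^t+\alpha\,\nabla_\theta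 g(h_k;\theta_k^t)^\top\big(G_k^{\lambda\mid t}-g(h_k;\theta_k^t)\big)$, where $G_k^{\lambda\mid t}$ is computed relative to the sequence $\vartheta_i=\theta_i^i$ (with $\theta_0^0=\theta_0$). Write $\theta_t^{\lambda}:=\theta_t^t$. Finally, $\bar G_i^{\lambda\mid t}$ denotes the interim $\lambda$-weighted synthetic gradient computed relative to the constant sequence $\vartheta_j=\theta_0$, and $\Delta_i^t:=\nabla_\theta g(h_i;\theta_0)^\top\big(\bar G_i^{\lambda\mid t}-g(h_i;\theta_0)\big)\in\mathbb{R}^p$. *)

From HB Require Import structures.
From mathcomp Require Import all_boot all_order all_algebra.
From mathcomp Require Import all_classical all_reals all_analysis.
Set Implicit Arguments. Unset Strict Implicit. Unset Printing Implicit Defensive.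
Import Order.TTheory GRing.Theory Num.Theory.
Import numFieldNormedType.Exports.
Local Open Scope ring_scope.

(* Vectors of R^n are row vectors 'rV[R]_n.  For v : 'rV_d and a d x d
   matrix M, the paper's  v^T M  (= M^T v) is the row vector  v *m M. *)

Section Defs.
Variable R : realType.

(* Usual Jacobian (rows = output coordinates, columns = input coordinates):
   the transpose of MathComp-Analysis' [jacobian] (which is lin1_mx ('d f p)). *)
Definition Jac n m (f : 'rV[R]_n -> 'rV[R]_m) (y : 'rV[R]_n) : 'M[R]_(m, n) :=
  (jacobian f y)^T.

Definition grad n (f : 'rV[R]_n -> R) (y : 'rV[R]_n) : 'rV[R]_n :=
  \row_j ('d f y (delta_mx 0 j : 'rV[R]_n)).

Definition norm2 n (v : 'rV[R]_n) : R := Num.sqrt (\sum_(k < n) v 0 k ^+ 2).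

Variables (d p m : nat).
Variable f : 'rV[R]_m * 'rV[R]_d -> 'rV[R]_d.
Variable x : nat -> 'rV[R]_m.
Variable h0 : 'rV[R]_d.
Variable ell : nat -> 'rV[R]_d -> R.            (* loss L_t = ell t (h_t) *)
Variable g : 'rV[R]_d -> 'rV[R]_p -> 'rV[R]_d.
Variables gamma lambda : R.
Variable theta0 : 'rV[R]_p.

Definition step (t : nat) (y : 'rV[R]_d) : 'rV[R]_d := f (x t, y).

Fixpoint hs (t : nat) : 'rV[R]_d :=
  match t with 0 => h0 | t'.+1 => step t (hs t') end.

Fixpoint flow (s n : nat) : 'rV[R]_d -> 'rV[R]_d :=
  match n with 0 => id | n'.+1 => fun y => step (s + n').+1 (flow s n' y) end.

Definition dh (tau s : nat) : 'M[R]_d := Jac (flow s (tau - s)) (hs s).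

Definition dL (tau s : nat) : 'rV[R]_d :=
  grad (fun y => ell tau (flow s (tau - s) y)) (hs s).

Definition gradg (h : 'rV[R]_d) (th : 'rV[R]_p) : 'M[R]_(d, p) := Jac (g h) th.

Definition Gn (vth : nat -> 'rV[R]_p) (k n : nat) : 'rV[R]_d :=
  \sum_(1 <= tau < n.+1) (gamma ^+ (tau - 1) *: dL (k + tau) k)
  + gamma ^+ n *: (g (hs (k + n)) (vth (k + n - 1)%N) *m dh (k + n) k).

Definition Glam (vth : nat -> 'rV[R]_p) (k H : nat) : 'rV[R]_d :=
  (1 - lambda) *: \sum_(1 <= n < H - k) (lambda ^+ (n - 1) *: Gn vth k n)
  + lambda ^+ (H - k - 1) *: Gn vth k (H - k).

(* Accumulate BP(lambda): bp alpha t = (theta_t, e_{t-1}) *)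
Fixpoint bp (alpha : R) (t : nat) : 'rV[R]_p * 'M[R]_(d, p) :=
  match t with
  | 0 => (theta0, 0)
  | t'.+1 =>
      let th := (bp alpha t').1 in
      let e_prev := (bp alpha t').2 in
      let e := (if t' == 0%N then 0 else gamma * lambda *: (dh t' t'.-1 *m e_prev))
               + gradg (hs t') th in
      let delta := dL t'.+1 t' + gamma *: (g (hs t'.+1) th *m dh t'.+1 t')
                   - g (hs t') th in
      (th + alpha *: (delta *m e), e)
  end.

Definition theta_BP (alpha : R) (t : nat) : 'rV[R]_p := (bp alpha t).1.

(* inner loop of online lambda-SG for horizon H, given the diagonal
   sequence vth i = theta_i^i : returns k |-> theta_k^H *)
Fixpoint lam_inner (alpha : R) (vth : nat -> 'rV[R]_p) (H k : nat) : 'rV[R]_p :=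
  match k with
  | 0 => theta0
  | k'.+1 =>
      let th := lam_inner alpha vth H k' in
      th + alpha *: ((Glam vth k' H - g (hs k') th) *m gradg (hs k') th)
  end.

(* lam_diag alpha t i = theta_i^i for i <= t *)
Fixpoint lam_diag (alpha : R) (t : nat) : nat -> 'rV[R]_p :=
  match t with
  | 0 => fun _ => theta0
  | t'.+1 =>
      let vth := lam_diag alpha t' in
      let new := lam_inner alpha vth t'.+1 t'.+1 in
      fun i => if (i <= t')%N then vth i else new
  end.

Definition theta_lam (alpha : R) (t : nat) : 'rV[R]_p := lam_diag alpha t t.

Definition Delta (t i : nat) : 'rV[R]_p :=
  (Glam (fun _ => theta0) i t - g (hs i) theta0) *m gradg (hs i) theta0.

End Defs.

(* With the learning rate alpha as a common factor, both algorithms move theta0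
   by alpha times a sum of t increments:
     theta_t^BP = theta0 + alpha U(alpha),  theta_t^lambda = theta0 + alpha V(alpha).
   As alpha -> 0 every weight vector tends to theta0, so U and V tend to their
   values with all weights frozen at theta0.  With frozen weights the two sums
   coincide: by the chain rule, G_k^(n+1) - G_k^(n) = gamma^n delta_(k+n) dh_(k+n,k),
   so the lambda-return telescopes into sum_j (gamma lambda)^j delta_(k+j) dh_(k+j,k),
   while the eligibility trace unrolls into
   sum_(i<=k) (gamma lambda)^(k-i) dh_(k,i) grad g_i;
   exchanging the order of the resulting double sum turns the backward view
   sum_k delta_k e_k into the forward view sum_i Delta_i^t.  Since this common
   limit is nonzero, |U - V| / |U| -> 0. *)

From Pilot Require Import Defs.
From HB Require Import structures.
From mathcomp Require Import all_boot all_order all_algebra.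
From mathcomp Require Import all_classical all_reals all_analysis.
From mathcomp Require Import zify.
Set Implicit Arguments.
Unset Strict Implicit.
Unset Printing Implicit Defensive.
Import Order.TTheory GRing.Theory Num.Theory.
Import numFieldNormedType.Exports.
Local Open Scope classical_set_scope.
Local Open Scope ring_scope.

Section ChainRule.
Variable R : realType.

Lemma row_lin1_mx n k (h : 'rV[R]_n -> 'rV[R]_k) i :
  row i (lin1_mx h) = h (delta_mx 0 i).
Proof. by apply/rowP => j; rewrite !mxE. Qed.

Lemma Jac_comp n k l (F : 'rV[R]_k -> 'rV[R]_l) (G : 'rV[R]_n -> 'rV[R]_k) y :
  differentiable G y -> differentiable F (G y) ->
  Jac (F \o G) y = Jac F (G y) *m Jac G y.
Proof.
move=> dG dF; rewrite /Jac /jacobian diff_comp // -trmx_mul; congr (_^T).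
apply/row_matrixP => i.
by rewrite row_lin1_mx rowE mulmxA -rowE row_lin1_mx mul_rV_lin1.
Qed.

Lemma Jac_id n (y : 'rV[R]_n) : Jac id y = 1%:M.
Proof.
rewrite /Jac /jacobian diff_val -[RHS]trmx1; congr (_^T).
by apply/row_matrixP => i; rewrite row_lin1_mx rowE mulmx1.
Qed.

Lemma grad_comp n k (F : 'rV[R]_k -> R) (G : 'rV[R]_n -> 'rV[R]_k) y :
  differentiable G y -> differentiable F (G y) ->
  grad (F \o G) y = grad F (G y) *m Jac G y.
Proof.
move=> dG dF; apply/rowP => j; rewrite /grad /Jac /jacobian !mxE diff_comp //=.
rewrite {1}(row_sum_delta ('d G y _)) linear_sum; apply: eq_bigr => i _.
by rewrite linearZ !mxE /= mulrC.
Qed.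

End ChainRule.

Lemma big_triangle (V : zmodType) (w : nat -> nat -> V) t :
  \sum_(i < t) \sum_(0 <= j < t - i) w i (i + j)%N
  = \sum_(k < t) \sum_(i < k.+1) w i k.
Proof.
elim: t => [|t IH]; first by rewrite !big_ord0.
rewrite big_ord_recr /= [RHS]big_ord_recr /= -IH subSnn big_nat1 addn0.
rewrite big_ord_recr /= addrA; congr (_ + _); rewrite -big_split /=.
apply: eq_bigr => i _.
by rewrite subSn ?(ltnW (ltn_ord i)) // big_nat_recr //= subnKC // ltnW.
Qed.

Lemma lambda_average (R : comPzRingType) (V : lmodType R) (lambda : R)
    (Y : nat -> V) N : (0 < N)%N ->
  (1 - lambda) *: \sum_(1 <= n < N) (lambda ^+ (n - 1) *: Y n)
    + lambda ^+ (N - 1) *: Y N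
  = Y 0%N + \sum_(0 <= j < N) lambda ^+ j *: (Y j.+1 - Y j).
Proof.
case: N => // n _; elim: n => [|n IH].
  by rewrite big_geq // big_nat1 scaler0 add0r !expr0 !scale1r addrC subrK.
rewrite big_nat_recr //= [in RHS]big_nat_recr //= addrA -IH !subn1 /=.
rewrite scalerDr scalerA mulrBl mul1r -exprS !scalerBl scalerBr.
by rewrite -!addrA [- (_ *: Y n.+1) + _]addrC.
Qed.

(* The paper's G_k^(n), G_k^(lambda|H), delta_k and e_k, all with weights frozen,
   written over abstract Jacobians dh, loss gradients dL, synthetic gradients gk
   and their weight Jacobians Jk. *)
Section ForwardBackwardViews.
Variables (R : comPzRingType) (d p T : nat) (gamma lambda : R).
Variable dh : nat -> nat -> 'M[R]_d.
Variable dL : nat -> nat -> 'rV[R]_d.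
Variable gk : nat -> 'rV[R]_d.
Variable Jk : nat -> 'M[R]_(d, p).
Hypothesis dh_id : forall k, dh k k = 1%:M.
Hypothesis dh_chain : forall k n,
  dh (k + n).+1 k = dh (k + n).+1 (k + n) *m dh (k + n) k.
Hypothesis dL_chain : forall k n, ((k + n).+1 <= T)%N ->
  dL (k + n).+1 k = dL (k + n).+1 (k + n) *m dh (k + n) k.

Definition nstep_return (k n : nat) : 'rV[R]_d :=
  \sum_(1 <= tau < n.+1) (gamma ^+ (tau - 1) *: dL (k + tau) k)
  + gamma ^+ n *: (gk (k + n) *m dh (k + n) k).

Definition lambda_return (k H : nat) : 'rV[R]_d :=
  (1 - lambda) *: \sum_(1 <= n < H - k) (lambda ^+ (n - 1) *: nstep_return k n)
  + lambda ^+ (H - k - 1) *: nstep_return k (H - k).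

Definition td_error (k : nat) : 'rV[R]_d :=
  dL k.+1 k + gamma *: (gk k.+1 *m dh k.+1 k) - gk k.

Fixpoint trace (k : nat) : 'M[R]_(d, p) :=
  match k with
  | 0 => Jk 0
  | k'.+1 => (gamma * lambda) *: (dh k'.+1 k' *m trace k') + Jk k'.+1
  end.

Lemma nstep_return0 k : nstep_return k 0 = gk k.
Proof. by rewrite /nstep_return big_geq // addn0 dh_id mulmx1 scale1r add0r. Qed.

Lemma nstep_returnS k n : ((k + n).+1 <= T)%N ->
  nstep_return k n.+1 - nstep_return k n
  = gamma ^+ n *: (td_error (k + n) *m dh (k + n) k).
Proof.
move=> kn_le_T; rewrite /nstep_return big_nat_recr //= subn1 /= addnS.
rewrite dL_chain // dh_chain /td_error !mulmxDl mulNmx -scalemxAl -mulmxA.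
rewrite exprSr -scalerA !scalerDr scalerN.
set S := \sum_(_ <= _ < _) _.
by rewrite -(addrA S) (addrC S) addrKA.
Qed.

Lemma lambda_return_td_errors k H : (k < H)%N -> (H <= T)%N ->
  lambda_return k H - gk k =
  \sum_(0 <= j < H - k) (gamma * lambda) ^+ j *: (td_error (k + j) *m dh (k + j) k).
Proof.
move=> kH HT; rewrite /lambda_return lambda_average ?subn_gt0 //.
rewrite nstep_return0 addrAC subrr add0r.
apply: eq_big_nat => j /andP[_ jH].
rewrite nstep_returnS; last by lia.
by rewrite scalerA exprMn mulrC.
Qed.

Lemma trace_expand k :
  trace k = \sum_(i < k.+1) (gamma * lambda) ^+ (k - i) *: (dh k i *m Jk i).
Proof.
elim: k => [|k IH]; first by rewrite big_ord1 /= dh_id mul1mx scale1r.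
rewrite /= IH [RHS]big_ord_recr /= subnn dh_id mul1mx scale1r.
congr (_ + _); rewrite mulmx_sumr scaler_sumr; apply: eq_bigr => i _.
have ik : (i <= k)%N by rewrite -ltnS.
rewrite -scalemxAr scalerA -exprS (subSn ik) mulmxA.
by have := dh_chain i (k - i); rewrite (subnKC ik) => <-.
Qed.

Lemma sum_td_error_trace t : (t <= T)%N ->
  \sum_(k < t) td_error k *m trace k
  = \sum_(i < t) (lambda_return i t - gk i) *m Jk i.
Proof.
move=> tT.
pose w i k := (gamma * lambda) ^+ (k - i) *: (td_error k *m dh k i *m Jk i).
transitivity (\sum_(k < t) \sum_(i < k.+1) w i k).
  apply: eq_bigr => k _; rewrite trace_expand mulmx_sumr; apply: eq_bigr => i _.
  by rewrite /w -scalemxAr mulmxA.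
rewrite -big_triangle; apply: eq_bigr => i _.
rewrite lambda_return_td_errors // mulmx_suml; apply: eq_bigr => j _.
by rewrite /w addKn -scalemxAl.
Qed.

End ForwardBackwardViews.

Section MatrixConvergence.
Variables (R : realFieldType) (T : Type) (F : set_system T).
Context {FF : Filter F}.

Lemma cvg_sum (V : normedModType R) (I : Type) (r : seq I) (P : pred I)
    (u : I -> T -> V) (l : I -> V) :
  (forall i, P i -> u i t @[t --> F] --> l i) ->
  \sum_(i <- r | P i) u i t @[t --> F] --> \sum_(i <- r | P i) l i.
Proof. by move=> ul; apply: (cvg_big _ FF ul); exact: add_continuous. Qed.

Lemma cvg_coord m n (M : T -> 'M[R]_(m, n)) (L : 'M[R]_(m, n)) i j :
  M @ F --> L -> M t i j @[t --> F] --> L i j.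
Proof. exact: continuous_cvg (@coord_continuous R m n i j L). Qed.

Lemma cvg_entrywise m n (M : T -> 'M[R]_(m, n)) (L : 'M[R]_(m, n)) :
  (forall i j, M t i j @[t --> F] --> L i j) -> M @ F --> L.
Proof.
move=> ML; apply/cvgrPdist_le => /= e e0; near=> t.
rewrite [leLHS]/Num.Def.normr /= mx_normrE (bigmax_le _ (ltW e0)) //= => i _.
rewrite !mxE /=; move: i; near: t; apply: filter_forall => /= i.
exact: ((cvgrPdist_le _ _).1 (ML i.1 i.2)).
Unshelve. all: by end_near. Qed.

Lemma cvg_mulmx m n k (A : T -> 'M[R]_(m, n)) (B : T -> 'M[R]_(n, k))
    (A0 : 'M[R]_(m, n)) (B0 : 'M[R]_(n, k)) :
  A @ F --> A0 -> B @ F --> B0 -> A t *m B t @[t --> F] --> A0 *m B0.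
Proof.
move=> AA0 BB0; apply: cvg_entrywise => i j; under eq_cvg do rewrite mxE.
by rewrite mxE; apply: cvg_sum => l _; apply: cvgM; apply: cvg_coord.
Qed.

End MatrixConvergence.

Section EuclideanNorm.
Variable R : realType.

Lemma norm2Z n (a : R) (w : 'rV[R]_n) : norm2 (a *: w) = `|a| * norm2 w.
Proof.
rewrite /norm2; under eq_bigr do rewrite mxE exprMn.
by rewrite -mulr_sumr sqrtrM ?sqr_ge0 // sqrtr_sqr.
Qed.

Lemma norm2_gt0 n (w : 'rV[R]_n) k : w 0 k != 0 -> 0 < norm2 w.
Proof.
move=> wk_neq0; rewrite /norm2 sqrtr_gt0 (bigD1 k) //=.
apply: ltr_wpDr; first by apply: sumr_ge0 => i _; exact: sqr_ge0.
by rewrite lt0r sqr_ge0 andbT expf_neq0.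
Qed.

Lemma norm2_continuous n : continuous (@norm2 R n).
Proof.
move=> w; apply: continuous_comp; last exact: sqrt_continuous.
apply: (@cvg_sum _ _ (nbhs w) _) => k _; under eq_cvg do rewrite expr2.
by rewrite expr2; apply: cvgM; apply: cvg_coord.
Qed.

Lemma relative_gap_cvg0 n (c : 'rV[R]_n) (A B U V : R -> 'rV[R]_n) S :
  (forall a, A a = c + a *: U a) -> (forall a, B a = c + a *: V a) ->
  U a @[a --> 0^'+] --> S -> V a @[a --> 0^'+] --> S -> 0 < norm2 S ->
  norm2 (A a - B a) / norm2 (A a - c) @[a --> 0^'+] --> 0.
Proof.
move=> A_def B_def US VS S_gt0.
have norm2_cvg (W : R -> 'rV[R]_n) (L : 'rV[R]_n) : W a @[a --> 0^'+] --> L ->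
    norm2 (W a) @[a --> 0^'+] --> norm2 L.
  exact: continuous_cvg (@norm2_continuous n L).
have gap_cvg0 : norm2 (U a - V a) / norm2 (U a) @[a --> 0^'+] --> 0.
  have := cvgM (norm2_cvg _ _ (cvgB US VS)) (cvgV (lt0r_neq0 S_gt0) (norm2_cvg _ _ US)).
  have norm2_0 : norm2 (0 : 'rV[R]_n) = 0.
    by rewrite /norm2 big1 ?sqrtr0 // => k _; rewrite mxE expr0n.
  by rewrite subrr norm2_0 mul0r; apply; typeclasses eauto.
apply: cvg_trans gap_cvg0; apply: near_eq_cvg; near=> a.
have a_gt0 : 0 < a by near: a; exact: nbhs_right_gt.
rewrite A_def B_def opprD addrACA subrr add0r (addrC c) addrK -scalerBr.
rewrite !norm2Z gtr0_norm //.
by rewrite invfM mulrACA divff ?mul1r // gt_eqF.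
Unshelve. all: by end_near. Qed.

End EuclideanNorm.

Section RecurrentNetwork.
Variables (R : realType) (d p m T : nat).
Variable f : 'rV[R]_m * 'rV[R]_d -> 'rV[R]_d.
Variable x : nat -> 'rV[R]_m.
Variable h0 : 'rV[R]_d.
Variable ell : nat -> 'rV[R]_d -> R.
Variable g : 'rV[R]_d -> 'rV[R]_p -> 'rV[R]_d.
Variables (gamma lambda : R) (theta0 : 'rV[R]_p).
Hypothesis f_diff : forall z, differentiable f z.
Hypothesis ell_diff :
  forall tau, (1 <= tau <= T)%N -> forall y, differentiable (ell tau) y.
Hypothesis g_diff : forall h th, differentiable (g h) th.
Hypothesis gradg_cont : forall h, continuous (fun th => gradg g h th).

Local Notation hs := (hs f x h0).
Local Notation flow := (flow f x).
Local Notation step := (step f x).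
Local Notation dh := (dh f x h0).
Local Notation dL := (dL f x h0 ell).

Lemma differentiable_step t y : differentiable (step t) y.
Proof. exact: (@differentiable_comp _ _ _ _ (fun y => (x t, y)) f). Qed.

Lemma differentiable_flow s n y : differentiable (flow s n) y.
Proof.
elim: n y => [|n IH] y //=.
by apply: differentiable_comp => //; exact: differentiable_step.
Qed.

Lemma flow_hs s n : flow s n (hs s) = hs (s + n).
Proof. by elim: n => [|n IH] /=; rewrite ?addn0 // IH addnS. Qed.

Lemma flowS s n : flow s n.+1 = flow (s + n) 1 \o flow s n.
Proof. by apply: funext => y /=; rewrite addn0. Qed.

Lemma dh_id k : dh k k = 1%:M.
Proof. by rewrite /Defs.dh subnn; apply: Jac_id. Qed.

Lemma dh_chain k n : dh (k + n).+1 k = dh (k + n).+1 (k + n) *m dh (k + n) k.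
Proof.
rewrite /Defs.dh; have -> : ((k + n).+1 - k = n.+1)%N by rewrite -addnS addKn.
rewrite subSnn addKn flowS.
by rewrite Jac_comp ?flow_hs ?addnS //; exact: differentiable_flow.
Qed.

Lemma dL_chain k n : ((k + n).+1 <= T)%N ->
  dL (k + n).+1 k = dL (k + n).+1 (k + n) *m dh (k + n) k.
Proof.
move=> knT; rewrite /Defs.dL /Defs.dh.
have -> : ((k + n).+1 - k = n.+1)%N by rewrite -addnS addKn.
rewrite subSnn addKn flowS.
have -> : (fun y => ell (k + n).+1 ((flow (k + n) 1 \o flow k n) y)) =
  (ell (k + n).+1 \o flow (k + n) 1) \o flow k n by [].
rewrite grad_comp ?flow_hs //; first exact: differentiable_flow.
apply: differentiable_comp; first exact: differentiable_flow.
by apply: ell_diff; rewrite knT.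
Qed.


Local Notation gk := (fun j => g (hs j) theta0).
Local Notation Jk := (fun j => gradg g (hs j) theta0).
Local Notation frozen := (fun _ : nat => theta0).
Local Notation Delta := (Delta f x h0 ell g gamma lambda theta0).
Local Notation bp := (bp f x h0 ell g gamma lambda theta0).
Local Notation theta_BP := (theta_BP f x h0 ell g gamma lambda theta0).
Local Notation Gn := (Gn f x h0 ell g gamma).
Local Notation Glam := (Glam f x h0 ell g gamma lambda).
Local Notation lam_inner := (lam_inner f x h0 ell g gamma lambda theta0).
Local Notation lam_diag := (lam_diag f x h0 ell g gamma lambda theta0).

Lemma sum_td_error_trace_Delta t : (t <= T)%N ->
  \sum_(k < t) td_error gamma dh dL gk k *m trace gamma lambda dh Jk k
  = \sum_(i < t) Delta t i.
Proof.
by move=> tT; rewrite (sum_td_error_trace gamma lambda gk Jk dh_id dh_chain dL_chain tT).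
Qed.

Lemma g_cvg (th : R -> 'rV[R]_p) j : th a @[a --> 0^'+] --> theta0 ->
  g (hs j) (th a) @[a --> 0^'+] --> g (hs j) theta0.
Proof.
by move=> th_cvg; apply: continuous_cvg th_cvg; exact/differentiable_continuous.
Qed.

Lemma gradg_cvg (th : R -> 'rV[R]_p) j : th a @[a --> 0^'+] --> theta0 ->
  gradg g (hs j) (th a) @[a --> 0^'+] --> gradg g (hs j) theta0.
Proof. by move=> th_cvg; apply: continuous_cvg th_cvg; exact: gradg_cont. Qed.

(* [bp a k.+1] carries the trace e_k used in the step from theta_k to theta_(k+1). *)
Definition bp_trace (a : R) (k : nat) : 'M[R]_(d, p) := (bp a k.+1).2.

Definition bp_td_error (a : R) (k : nat) : 'rV[R]_d :=
  dL k.+1 k + gamma *: (g (hs k.+1) (theta_BP a k) *m dh k.+1 k)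
  - g (hs k) (theta_BP a k).

Lemma theta_BPS a k :
  theta_BP a k.+1 = theta_BP a k + a *: (bp_td_error a k *m bp_trace a k).
Proof. by []. Qed.

Lemma bp_traceS a k : bp_trace a k.+1 =
  (gamma * lambda) *: (dh k.+1 k *m bp_trace a k) + gradg g (hs k.+1) (theta_BP a k.+1).
Proof. by []. Qed.

Lemma theta_BP_expand k a :
  theta_BP a k = theta0 + a *: \sum_(j < k) bp_td_error a j *m bp_trace a j.
Proof.
elim: k => [|k IH]; first by rewrite big_ord0 scaler0 addr0.
by rewrite theta_BPS IH big_ord_recr /= scalerDr addrA.
Qed.

Lemma bp_td_error_cvg k : theta_BP a k @[a --> 0^'+] --> theta0 ->
  bp_td_error a k @[a --> 0^'+] --> td_error gamma dh dL gk k.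
Proof.
move=> thetaBP_cvg; rewrite /bp_td_error; apply: cvgB; last exact: g_cvg.
apply: cvgD; first exact: cvg_cst.
apply: cvgZ; first exact: cvg_cst.
by apply: cvg_mulmx; [exact: g_cvg | exact: cvg_cst].
Qed.

Lemma bp_cvg k : theta_BP a k @[a --> 0^'+] --> theta0 /\
  bp_trace a k @[a --> 0^'+] --> trace gamma lambda dh Jk k.
Proof.
elim: k => [|k [thetaBP_cvg trace_cvg]].
  split; first exact: cvg_cst.
  by under eq_cvg do rewrite /bp_trace /= add0r; exact: cvg_cst.
have td_cvg := bp_td_error_cvg thetaBP_cvg.
have thetaBP_cvgS : theta_BP a k.+1 @[a --> 0^'+] --> theta0.
  suff : theta_BP a k + a *: (bp_td_error a k *m bp_trace a k) @[a --> 0^'+]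
           --> theta0 + 0 *: (td_error gamma dh dL gk k *m trace gamma lambda dh Jk k).
    by rewrite scale0r addr0.
  apply: cvgD thetaBP_cvg _; apply: cvgZ; last exact: cvg_mulmx.
  exact: cvg_at_right_filter cvg_id.
split => //; under eq_cvg do rewrite bp_traceS.
apply: cvgD; last exact: gradg_cvg.
by apply: cvgZ; [exact: cvg_cst | apply: cvg_mulmx; first exact: cvg_cst].
Qed.

Lemma Gn_cvg (vth : R -> nat -> 'rV[R]_p) k n :
  (forall i, vth a i @[a --> 0^'+] --> theta0) ->
  Gn (vth a) k n @[a --> 0^'+] --> Gn frozen k n.
Proof.
move=> vth_cvg; rewrite /Defs.Gn; apply: cvgD; first exact: cvg_cst.
apply: cvgZ; first exact: cvg_cst.
by apply: cvg_mulmx; [exact: g_cvg | exact: cvg_cst].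
Qed.

Lemma Glam_cvg (vth : R -> nat -> 'rV[R]_p) k H :
  (forall i, vth a i @[a --> 0^'+] --> theta0) ->
  Glam (vth a) k H @[a --> 0^'+] --> Glam frozen k H.
Proof.
move=> vth_cvg; rewrite /Defs.Glam.
apply: cvgD; apply: cvgZ; try exact: cvg_cst; last exact: Gn_cvg.
apply: cvg_sum => n _; apply: cvgZ; first exact: cvg_cst.
exact: Gn_cvg.
Qed.

Definition lam_increment (a : R) (vth : nat -> 'rV[R]_p) (H j : nat) : 'rV[R]_p :=
  (Glam vth j H - g (hs j) (lam_inner a vth H j))
    *m gradg g (hs j) (lam_inner a vth H j).

Lemma lam_innerS a vth H k :
  lam_inner a vth H k.+1 = lam_inner a vth H k + a *: lam_increment a vth H k.
Proof. by []. Qed.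

Lemma lam_inner_expand H k a vth :
  lam_inner a vth H k = theta0 + a *: \sum_(j < k) lam_increment a vth H j.
Proof.
elim: k => [|k IH]; first by rewrite big_ord0 scaler0 addr0.
by rewrite lam_innerS IH big_ord_recr /= scalerDr addrA.
Qed.

Lemma lam_increment_cvg (vth : R -> nat -> 'rV[R]_p) H j :
  (forall i, vth a i @[a --> 0^'+] --> theta0) ->
  lam_inner a (vth a) H j @[a --> 0^'+] --> theta0 ->
  lam_increment a (vth a) H j @[a --> 0^'+] --> Delta H j.
Proof.
move=> vth_cvg inner_cvg; apply: cvg_mulmx; last exact: gradg_cvg.
by apply: cvgB; [exact: Glam_cvg | exact: g_cvg].
Qed.

Lemma lam_inner_cvg (vth : R -> nat -> 'rV[R]_p) H :
  (forall i, vth a i @[a --> 0^'+] --> theta0) ->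
  forall k, lam_inner a (vth a) H k @[a --> 0^'+] --> theta0 /\
    lam_increment a (vth a) H k @[a --> 0^'+] --> Delta H k.
Proof.
move=> vth_cvg; elim=> [|k [inner_cvg incr_cvg]].
  by split; [exact: cvg_cst | apply: lam_increment_cvg => //; exact: cvg_cst].
suff innerS_cvg : lam_inner a (vth a) H k.+1 @[a --> 0^'+] --> theta0.
  by split; last exact: lam_increment_cvg vth_cvg innerS_cvg.
suff : lam_inner a (vth a) H k + a *: lam_increment a (vth a) H k
         @[a --> 0^'+] --> theta0 + (0 : R) *: Delta H k.
  by rewrite scale0r addr0.
apply: cvgD inner_cvg _; apply: cvgZ incr_cvg.
exact: cvg_at_right_filter cvg_id.
Qed.

Lemma lam_diagS a t i : lam_diag a t.+1 i =
  if (i <= t)%N then lam_diag a t i else lam_inner a (lam_diag a t) t.+1 t.+1.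
Proof. by []. Qed.

Lemma lam_diag_cvg t i : lam_diag a t i @[a --> 0^'+] --> theta0.
Proof.
elim: t i => [|t IH] i; first exact: cvg_cst.
under eq_cvg do rewrite lam_diagS.
case: (i <= t)%N; first exact: IH.
by have [] := @lam_inner_cvg (fun a => lam_diag a t) t.+1 IH t.+1.
Qed.

Lemma theta_lam_expand t a :
  theta_lam f x h0 ell g gamma lambda theta0 a t.+1
  = theta0 + a *: \sum_(j < t.+1) lam_increment a (lam_diag a t) t.+1 j.
Proof. by rewrite /theta_lam lam_diagS ltnn lam_inner_expand. Qed.

Lemma theta_BP_increments_cvg t : (t <= T)%N ->
  \sum_(j < t) bp_td_error a j *m bp_trace a j @[a --> 0^'+]
    --> \sum_(i < t) Delta t i.
Proof.
move=> tT; rewrite -sum_td_error_trace_Delta //.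
apply: cvg_sum => j _; have [thetaBP_cvg trace_cvg] := bp_cvg j.
by apply: cvg_mulmx trace_cvg; exact: bp_td_error_cvg.
Qed.

Lemma theta_lam_increments_cvg t :
  \sum_(j < t.+1) lam_increment a (lam_diag a t) t.+1 j @[a --> 0^'+]
    --> \sum_(i < t.+1) Delta t.+1 i.
Proof.
apply: cvg_sum => j _.
exact: (@lam_inner_cvg (fun a => lam_diag a t) t.+1 (lam_diag_cvg t) j).2.
Qed.

Lemma theta_BP_theta_lam_relative_gap_cvg0 t : (t < T)%N ->
  0 < norm2 (\sum_(i < t.+1) Delta t.+1 i) ->
  norm2 (theta_BP a t.+1 - theta_lam f x h0 ell g gamma lambda theta0 a t.+1)
    / norm2 (theta_BP a t.+1 - theta0) @[a --> 0^'+] --> 0.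
Proof.
move=> tT S_gt0; exact: relative_gap_cvg0 (theta_BP_expand t.+1) (theta_lam_expand t)
  (theta_BP_increments_cvg tT) (theta_lam_increments_cvg (t := t)) S_gt0.
Qed.

End RecurrentNetwork.

Theorem theorem1 (R : realType) (d p m T : nat)
  (f : 'rV[R]_m * 'rV[R]_d -> 'rV[R]_d) (x : nat -> 'rV[R]_m) (h0 : 'rV[R]_d)
  (ell : nat -> 'rV[R]_d -> R) (g : 'rV[R]_d -> 'rV[R]_p -> 'rV[R]_d)
  (gamma lambda : R) (theta0 : 'rV[R]_p) (t : nat) :
  (0 < d)%N -> (0 < p)%N -> (1 <= T)%N ->
  (forall z, differentiable f z) ->
  (forall tau, (1 <= tau <= T)%N -> forall y, differentiable (ell tau) y) ->
  (forall h th, differentiable (g h) th) ->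
  (forall h, continuous (fun th => gradg g h th)) ->
  0 <= gamma <= 1 -> 0 <= lambda <= 1 ->
  (1 <= t <= T)%N ->
  (forall k : 'I_p,
     (\sum_(i < t) Delta f x h0 ell g gamma lambda theta0 t i) 0 k != 0) ->
  (fun alpha : R =>
     norm2 (theta_BP f x h0 ell g gamma lambda theta0 alpha t
            - theta_lam f x h0 ell g gamma lambda theta0 alpha t)
     / norm2 (theta_BP f x h0 ell g gamma lambda theta0 alpha t - theta0))
    @ 0^'+ --> 0.
Proof.
move=> _ p_gt0 _ f_diff ell_diff g_diff gradg_cont _ _.
case: t => // t /andP[_ tT] Delta_neq0.
have S_gt0 := norm2_gt0 (Delta_neq0 (Ordinal p_gt0)).
exact (theta_BP_theta_lam_relative_gap_cvg0 f_diff ell_diff g_diff gradg_cont tT S_gt0).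
Qed.
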